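(* Let $\Phi$ be an $e$-dimensional formal group law over $k$, $m\in\mathbb N_{>0}\cup\{\infty\}$, and let $K\subseteq L$ be an extension of $\Phi[m]$-fields. If $K$ is strict, i.e. $C_K=K^p$, then the field extension $K\subseteq L$ is separable.
   Context: $k$ is a field of characteristic $p>0$. For a $k$-algebra $R$, $R[\bar v]:=R[X_1,\dots,X_e]/(X_1^{p^m},\dots,X_e^{p^m})$ ($R[[\bar X]]$ if $m=\infty$); $\bar w$ is a second $e$-tuple of $m$-truncated variables. $\Phi[m]\in(k[\bar v,\bar w])^e$ is the image of $\Phi(\bar X,\bar Y)$ under $X_i\mapsto v_i,Y_i\mapsto w_i$. An $m$-truncated $e$-dimensional HS-derivation on $R$ over $k$ is a family $(D_{\mathbf i}:R\to R)_{\mathbf i\in\{0,\dots,p^m-1\}^e}$ with $r\mapsto\sum D_{\mathbf i}(r)\bar v^{\mathbf i}$ a $k$-algebra homomorphism $R\to R[\bar v]$ and $D_{\mathbf 0}=\mathrm{id}$; it is an $F$-derivation if $\sum_{\mathbf i,\mathbf j}D_{\mathbf j}(D_{\mathbf i}(r))\bar v^{\mathbf i}\bar w^{\mathbf j}=\sum_{\mathbf i}D_{\mathbf i}(r)F(\bar v,\bar w)^{\mathbf i}$ for all $r$. An $F$-field is a field containing $k$ with an $F$-derivation; an extension of $F$-fields $K\subseteq L$ means $D^L_{\mathbf i}|_K=D^K_{\mathbf i}$ for all $\mathbf i$. $C_K:=\bigcap_{l=1}^e\ker D_{\varepsilon_l}$ ($\varepsilon_l$ the $l$-th unit vector). *)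

From HB Require Import structures.
From mathcomp Require Import all_boot all_order all_algebra.
Set Implicit Arguments.
Unset Strict Implicit.
Unset Printing Implicit Defensive.
Import GRing.Theory.
Local Open Scope ring_scope.

(** Multi-indices in n variables. *)
Definition mi (n : nat) := {ffun 'I_n -> nat}.
Definition mi0 n : mi n := [ffun => 0%N].
Definition mi_unit n (j : 'I_n) : mi n := [ffun i => nat_of_bool (i == j)].
Definition mi_deg n (c : mi n) : nat := (\sum_(i < n) c i)%N.
Definition mi_le n (a c : mi n) : bool := [forall i, (a i <= c i)%N].
Definition mi_sub n (c a : mi n) : mi n := [ffun i => (c i - a i)%N].
Definition mi_of n B (a : {ffun 'I_n -> 'I_B}) : mi n := [ffun i => nat_of_ord (a i)].
(** (a,b) as a multi-index in the 2n variables (X_1..X_n, Y_1..Y_n). *)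
Definition mi_pair n (a b : mi n) : mi (n + n) :=
  [ffun j => match split j with inl i => a i | inr i => b i end].

(** Formal power series in n variables, as coefficient functions. *)
Definition ps (R : Type) n := mi n -> R.

Section PS.
Variable R : nzRingType.

Definition psone n : ps R n := fun c => if [forall i, c i == 0%N] then 1 else 0.
Definition psvar n (j : 'I_n) : ps R n := fun c => if c == mi_unit j then 1 else 0.
Definition psmul n (f g : ps R n) : ps R n := fun c =>
  \sum_(a : {ffun 'I_n -> 'I_(mi_deg c).+1} | mi_le (mi_of a) c)
     f (mi_of a) * g (mi_sub c (mi_of a)).
Definition psexp n (f : ps R n) (j : nat) : ps R n := iter j (psmul f) (@psone n).
Definition psmonom m n (H : 'I_m -> ps R n) (a : mi m) : ps R n :=
  \big[@psmul n/@psone n]_(j < m) psexp (H j) (a j).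
(** Substitution G(H_1,...,H_m), valid when all H_j have zero constant term
    (then only monomials a with |a| <= |c| contribute to the coefficient c). *)
Definition pssubst m n (G : ps R m) (H : 'I_m -> ps R n) : ps R n := fun c =>
  \sum_(a : {ffun 'I_m -> 'I_(mi_deg c).+1}) G (mi_of a) * psmonom H (mi_of a) c.
Definition pspair m n (A B : 'I_m -> ps R n) : 'I_(m + m) -> ps R n :=
  fun j => match split j with inl i => A i | inr i => B i end.

(** e-dimensional formal group law Phi(X,Y) (variables X = first block,
    Y = second block of 'I_(e+e)):  Phi(X,Y) = X + Y mod deg 2, and
    Phi(Phi(X,Y),Z) = Phi(X,Phi(Y,Z)). *)
Definition is_FGL e (Phi : 'I_e -> ps R (e + e)) : Prop :=
  [/\ (forall l, Phi l (mi0 _) = 0),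
      (forall l (j : 'I_(e + e)),
          Phi l (mi_unit j) = if (j == lshift e l) || (j == rshift e l) then 1 else 0) &
      (forall l (c : mi (e + e + e)),
        pssubst (Phi l)
          (pspair (fun i => pssubst (Phi i)
                              (pspair (fun i' => psvar (lshift e (lshift e i')))
                                      (fun i' => psvar (lshift e (rshift e i')))))
                  (fun i => psvar (rshift (e + e) i))) c
        =
        pssubst (Phi l)
          (pspair (fun i => psvar (lshift e (lshift e i)))
                  (fun i => pssubst (Phi i)
                              (pspair (fun i' => psvar (lshift e (rshift e i')))
                                      (fun i' => psvar (rshift (e + e) i'))))) c)].
End PS.

(** m : None = infinity, Some t = t-truncated; indices i with all i_l < p^t. *)
Definition inrange (p : nat) (m : option nat) n (i : mi n) : bool :=
  match m with Some t => [forall l, (i l < p ^ t)%N] | None => true end.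

(** m-truncated e-dimensional HS-derivation on K over k (k-structure via iK). *)
Definition is_HS (k K : fieldType) (iK : {rmorphism k -> K}) (p : nat) (m : option nat)
    e (D : mi e -> K -> K) : Prop :=
  (forall x, D (mi0 e) x = x) /\
  forall i, inrange p m i ->
   [/\ forall x y, D i (x + y) = D i x + D i y,
       forall c x, D i (iK c * x) = iK c * D i x,
       D i 1 = (if i == mi0 e then 1 else 0) &
       forall x y, D i (x * y) =
         \sum_(j : {ffun 'I_e -> 'I_(mi_deg i).+1} | mi_le (mi_of j) i)
            D (mi_of j) x * D (mi_sub i (mi_of j)) y].

(** Phi[m]-derivation: coefficientwise form of
    sum_{i,j} D_j(D_i r) v^i w^j = sum_i D_i(r) Phi(v,w)^i  in K[v,w]:
    coefficient of v^a w^b.  Terms with some i_l > |a|+|b| vanish since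
    Phi has zero constant term, so the sum is restricted to those. *)
Definition is_Fder (k K : fieldType) (iK : {rmorphism k -> K}) (p : nat) (m : option nat)
    e (Phi : 'I_e -> ps k (e + e)) (D : mi e -> K -> K) : Prop :=
  is_HS iK p m D /\
  forall a b : mi e, inrange p m a -> inrange p m b -> forall x,
    D b (D a x) =
    \sum_(i : {ffun 'I_e -> 'I_(mi_deg a + mi_deg b).+1} | inrange p m (mi_of i))
       iK (psmonom Phi (mi_of i) (mi_pair a b)) * D (mi_of i) x.

Definition strict (K : fieldType) (p : nat) e (D : mi e -> K -> K) : Prop :=
  forall x, (forall l : 'I_e, D (mi_unit l) x = 0) <-> exists y, x = y ^+ p.

(** Separability of K -> L in characteristic p: K^(1/p) and L are linearly
    disjoint over K, transported through the Frobenius isomorphism: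
    K-linearly independent l_i have K-linearly independent p-th powers. *)
Definition separable_ext (K L : fieldType) (f : {rmorphism K -> L}) (p : nat) : Prop :=
  forall n (l : 'I_n -> L),
    (forall c : 'I_n -> K, \sum_(i < n) f (c i) * l i = 0 -> forall i, c i = 0) ->
    (forall c : 'I_n -> K, \sum_(i < n) f (c i) * l i ^+ p = 0 -> forall i, c i = 0).

(* Each first-order component D_(e_l) of an HS-derivation is a derivation, so it kills
   p-th powers. Suppose the l_i are K-independent but the l_i^p satisfy a relation
   sum c_i l_i^p = 0 with as few nonzero coefficients as possible, normalised so that
   c_(i0) = 1. Applying D_(e_l) (computed in L, where it extends the one of K) gives
   the relation sum D_(e_l)(c_i) l_i^p = 0 with fewer nonzero coefficients, so every
   D_(e_l)(c_i) vanishes. By strictness c_i = d_i^p, and injectivity of Frobenius turns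
   the relation into sum d_i l_i = 0 with d_(i0) = 1, contradicting independence. *)
From HB Require Import structures.
From mathcomp Require Import all_boot all_order all_algebra.
Set Implicit Arguments.
Unset Strict Implicit.
Unset Printing Implicit Defensive.
Import GRing.Theory.
Local Open Scope ring_scope.

Definition derivation (R : nzRingType) (d : R -> R) : Prop :=
  (forall x y, d (x + y) = d x + d y) /\ (forall x y, d (x * y) = x * d y + d x * y).

Section Derivation.
Variables (R : comNzRingType) (d : R -> R).
Hypothesis hd : derivation d.

Lemma derivationD x y : d (x + y) = d x + d y.
Proof. exact: hd.1. Qed.

Lemma derivationM x y : d (x * y) = x * d y + d x * y.
Proof. exact: hd.2. Qed.

Lemma derivation0 : d 0 = 0.
Proof. by apply: (addrI (d 0)); rewrite -derivationD !addr0. Qed.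

Lemma derivation1 : d 1 = 0.
Proof.
by apply: (addrI (d 1)); rewrite addr0 -[in RHS](mulr1 1) derivationM mulr1 mul1r.
Qed.

Lemma derivation_sum n (F : 'I_n -> R) : d (\sum_(i < n) F i) = \sum_(i < n) d (F i).
Proof. exact: (big_morph _ derivationD derivation0). Qed.

Lemma derivationXn x n : d (x ^+ n.+1) = x ^+ n * d x *+ n.+1.
Proof.
elim: n => [|n IH]; first by rewrite expr1 expr0 mul1r.
rewrite exprS derivationM IH -mulrnAr mulrA -exprS [in RHS]mulrSr.
by rewrite (mulrC (d x)) mulrnAr.
Qed.

Lemma derivation_pchar p x : p \in [pchar R] -> d (x ^+ p) = 0.
Proof.
move=> hp; have := pcharf_prime hp; case: p hp => // q hp _.
by rewrite derivationXn mulrn_pchar.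
Qed.

End Derivation.

Lemma mi_deg_unit e (l : 'I_e) : mi_deg (mi_unit l) = 1%N.
Proof.
rewrite /mi_deg (bigD1 l) //= big1 ?addn0; first by rewrite ffunE eqxx.
by move=> i /negbTE hi; rewrite ffunE hi.
Qed.

Lemma mi_of_inj n B : injective (@mi_of n B).
Proof.
by move=> a b /ffunP hab; apply/ffunP => i; apply: val_inj; have := hab i; rewrite !ffunE.
Qed.

Lemma mi_le_unit e (l : 'I_e) (a : mi e) :
  mi_le a (mi_unit l) -> a = mi0 e \/ a = mi_unit l.
Proof.
move=> /forallP hle.
have hz i : i != l -> a i = 0%N.
  by move=> /negbTE hi; have := hle i; rewrite ffunE hi leqn0 => /eqP.
have := hle l; rewrite ffunE eqxx leq_eqVlt ltnS leqn0 => /orP [] /eqP hl.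
- right; apply/ffunP => i; rewrite ffunE.
  by case: (eqVneq i l) => [->|/hz //]; rewrite hl.
- left; apply/ffunP => i; rewrite ffunE.
  by case: (eqVneq i l) => [->|/hz //].
Qed.

Lemma inrange_unit p m e (l : 'I_e) :
  (1 < p)%N -> (forall t, m = Some t -> (0 < t)%N) -> inrange p m (mi_unit l).
Proof.
move=> hp hm; rewrite /inrange; case Em: m => [t|] //; apply/forallP => i.
rewrite ffunE (leq_ltn_trans (leq_b1 _)) // -{1}(expn0 p) ltn_exp2l //.
exact: hm Em.
Qed.

Section HSUnitDerivation.
Variables (k K : fieldType) (iK : {rmorphism k -> K}) (p : nat) (m : option nat) (e : nat).
Variables (D : mi e -> K -> K) (l : 'I_e).
Hypotheses (hD : is_HS iK p m D) (hl : inrange p m (mi_unit l)).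

Lemma is_HS_unitM x y : D (mi_unit l) (x * y) = x * D (mi_unit l) y + D (mi_unit l) x * y.
Proof.
case: hD => hD0 /(_ _ hl) [_ _ _ ->].
have h1 : (1 < (mi_deg (mi_unit l)).+1)%N by rewrite mi_deg_unit.
pose j0 : {ffun 'I_e -> 'I_(mi_deg (mi_unit l)).+1} := [ffun => ord0].
pose j1 : {ffun 'I_e -> 'I_(mi_deg (mi_unit l)).+1} :=
  [ffun i => if i == l then Ordinal h1 else ord0].
have ej0 : mi_of j0 = mi0 e by apply/ffunP => i; rewrite !ffunE.
have ej1 : mi_of j1 = mi_unit l by apply/ffunP => i; rewrite !ffunE; case: (i == l).
have hj0 : mi_le (mi_of j0) (mi_unit l) by apply/forallP => i; rewrite ej0 ffunE.
have hj1 : mi_le (mi_of j1) (mi_unit l) by apply/forallP => i; rewrite ej1.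
have j10 : j1 != j0.
  by apply/eqP => /(congr1 (@mi_of _ _)); rewrite ej0 ej1 => /ffunP /(_ l); rewrite !ffunE eqxx.
rewrite (bigD1 j0) // (bigD1 j1) /=; last by rewrite hj1 j10.
rewrite big1 => [|j /andP [/andP [/mi_le_unit hj nj0] nj1]]; last first.
  by case: hj => [hj|hj]; [move: nj0 | move: nj1];
     rewrite -(inj_eq (@mi_of_inj _ _)) ?ej0 ?ej1 hj eqxx.
have sub0 : mi_sub (mi_unit l) (mi0 e) = mi_unit l by apply/ffunP => i; rewrite !ffunE subn0.
have subl : mi_sub (mi_unit l) (mi_unit l) = mi0 e by apply/ffunP => i; rewrite !ffunE subnn.
by rewrite ej0 ej1 sub0 subl !hD0 addr0.
Qed.

Lemma is_HS_unit_derivation : derivation (D (mi_unit l)).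
Proof. by split; [case: hD => _ /(_ _ hl) [] | exact: is_HS_unitM]. Qed.

End HSUnitDerivation.

Section DifferentialSeparability.
Variables (K L : fieldType) (f : {rmorphism K -> L}) (p : nat) (I : Type).
Variables (dK : I -> K -> K) (dL : I -> L -> L).
Hypotheses (hpchar : p \in [pchar K]) (hdK : forall j, derivation (dK j))
  (hdL : forall j, derivation (dL j)) (hext : forall j x, dL j (f x) = f (dK j x))
  (hconst : forall x, (forall j, dK j x = 0) -> exists y, x = y ^+ p).

Let pchar_L : p \in [pchar L] := rmorph_pchar f hpchar.

Section PowRelation.
Variables (n : nat) (l : 'I_n -> L).

Definition pow_relation (c : 'I_n -> K) := \sum_(i < n) f (c i) * l i ^+ p = 0.

Lemma pow_relationZ c a : pow_relation c -> pow_relation (fun i => c i * a).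
Proof.
rewrite /pow_relation => hc; under eq_bigr => i _ do rewrite rmorphM mulrAC.
by rewrite -mulr_suml hc mul0r.
Qed.

Lemma pow_relation_derivation j c : pow_relation c -> pow_relation (dK j \o c).
Proof.
rewrite /pow_relation => hc; have := congr1 (dL j) hc.
rewrite derivation_sum ?derivation0 // => hd; rewrite -[RHS]hd; apply: eq_bigr => i _.
by rewrite derivationM // (derivation_pchar (hdL j)) // mulr0 add0r hext.
Qed.

Lemma pow_relation_root c d : (forall i, c i = d i ^+ p) ->
  pow_relation c -> \sum_(i < n) f (d i) * l i = 0.
Proof.
rewrite /pow_relation => hcd hc.
have : (\sum_(i < n) f (d i) * l i) ^+ p = 0.
  rewrite -(pFrobenius_autE pchar_L) rmorph_sum -[RHS]hc; apply: eq_bigr => i _.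
  by rewrite /= pFrobenius_autE exprMn -rmorphXn -hcd.
by move/eqP; rewrite expf_eq0 => /andP [_ /eqP].
Qed.

Lemma card_support_derivation j (c : 'I_n -> K) i0 : c i0 = 1 ->
  (#|support (dK j \o c)| < #|support c|)%N.
Proof.
move=> hi0; rewrite (cardD1 i0 (support c)) inE hi0 oner_neq0 add1n ltnS.
apply: subset_leq_card; apply/subsetP => i; rewrite !inE => hi.
apply/andP; split.
  by apply: contraNneq hi => ->; rewrite /= hi0 derivation1.
by apply: contraNneq hi => /= ->; rewrite derivation0.
Qed.

Lemma card_support_scale (c : 'I_n -> K) a : (#|support (fun i => c i * a)%R| <= #|support c|)%N.
Proof.
apply: subset_leq_card; apply/subsetP => i; rewrite !inE.
by rewrite mulf_eq0 negb_or => /andP [].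
Qed.

End PowRelation.

Lemma separable_ext_of_constants : separable_ext f p.
Proof.
move=> n l hl c; move: {2}#|_| (leqnn #|support c|) => s.
elim: s c => [|s IH] c hs hc i0; apply/eqP; apply: contraT => hi0.
  by move: hs; rewrite leqn0 => /eqP /card0_eq /(_ i0); rewrite inE hi0.
pose c' i := c i / c i0.
have c'i0 : c' i0 = 1 by rewrite /c' divff.
have hc' : pow_relation l c' by apply: pow_relationZ.
have c'_const i j : dK j (c' i) = 0.
  apply: IH (pow_relation_derivation j hc') i.
  rewrite -ltnS (leq_trans (card_support_derivation j c'i0)) //.
  exact: leq_trans (card_support_scale _ _) hs.
have [d hd] := fin_all_exists (fun i => hconst (c'_const i)).
have := hd i0; rewrite c'i0 (hl d (pow_relation_root hd hc') i0) expr0n.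
by rewrite eqn0Ngt (prime_gt0 (pcharf_prime hpchar)) => /eqP; rewrite oner_eq0.
Qed.

End DifferentialSeparability.

Theorem mainTheorem7 (k : fieldType) (p : nat) (hp : prime p) (hchar : p \in [pchar k])
  (e : nat) (Phi : 'I_e -> ps k (e + e)) (hPhi : is_FGL Phi)
  (m : option nat) (hm : forall t, m = Some t -> (0 < t)%N)
  (K L : fieldType) (iK : {rmorphism k -> K}) (iL : {rmorphism k -> L})
  (DK : mi e -> K -> K) (DL : mi e -> L -> L)
  (hK : is_Fder iK p m Phi DK) (hL : is_Fder iL p m Phi DL)
  (f : {rmorphism K -> L}) (hf : forall c, f (iK c) = iL c)
  (hext : forall i, inrange p m i -> forall x, DL i (f x) = f (DK i x))
  (hstrict : strict p DK) :
  separable_ext f p.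
Proof.
have hunit (l : 'I_e) : inrange p m (mi_unit l) by apply: inrange_unit; rewrite ?prime_gt1.
apply: (@separable_ext_of_constants _ _ f p _ (DK \o @mi_unit e) (DL \o @mi_unit e)).
- exact: rmorph_pchar hchar.
- by move=> j; apply: is_HS_unit_derivation hK.1 _.
- by move=> j; apply: is_HS_unit_derivation hL.1 _.
- by move=> j; apply: hext.
- by move=> x /hstrict.
Qed.
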